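(* Let $n\equiv 3\pmod 4$ be a positive integer. Then $n$ is simultaneously a Carmichael number and a Gaussian Carmichael number if and only if $n$ is a $1$-Williams number and every prime $p$ dividing $n$ satisfies $p\equiv 3\pmod 4$.
   Context: A Carmichael number is a composite $n$ with $a^{n-1}\equiv 1\pmod n$ for all integers $a$ coprime to $n$ (equivalently, by Korselt's criterion, $n$ composite, square-free, and $p-1\mid n-1$ for every prime $p\mid n$). The function $\mathcal{F}$ is defined by $\mathcal{F}(n)=n-1$ if $n\equiv 1\pmod 4$, $\mathcal{F}(n)=n+1$ if $n\equiv 3 \pmod 4$, $\mathcal{F}(n)=n$ otherwise. A composite integer $n$ is a Gaussian Fermat pseudoprime to base $z\in\mathbb{Z}[i]$ if $\gcd(n,z\overline{z})=1$ and $(z/\overline{z})^{\mathcal{F}(n)}\equiv 1\pmod n$ in $\mathbb{Z}[i]/n\mathbb{Z}[i]$; a composite $n$ is a Gaussian Carmichael number if it is a Gaussian Fermat pseudoprime to every base $z\in\mathbb{Z}[i]$ with $\gcd(n,z\overline{z})=1$. A $1$-Williams number is a composite square-free integer $n$ such that for every prime $p\mid n$, $p+1\mid n+1$ and $p-1\mid n-1$. *)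

From HB Require Import structures.
From mathcomp Require Import all_boot all_order all_algebra.
Set Implicit Arguments. Unset Strict Implicit. Unset Printing Implicit Defensive.
Import Order.TTheory GRing.Theory Num.Theory.

Local Open Scope ring_scope.

Definition composite (n : nat) : bool := (1 < n)%N && ~~ prime n.

Definition squarefree (n : nat) : Prop :=
  forall p : nat, prime p -> ~~ (p * p %| n)%N.

Definition carmichael (n : nat) : Prop :=
  composite n /\
  forall a : int, coprimez a n%:Z -> (a ^+ n.-1 == 1 %[mod n%:Z])%Z.

(* Gaussian integers Z[i] represented as pairs (a, b) meaning a + b i. *)
Definition gauss := (int * int)%type.
Definition gmul (z w : gauss) : gauss :=
  (z.1 * w.1 - z.2 * w.2, z.1 * w.2 + z.2 * w.1).
Definition gone : gauss := (1, 0).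
Definition gconj (z : gauss) : gauss := (z.1, - z.2).
Definition gpow (z : gauss) (k : nat) : gauss := iter k (gmul z) gone.
Definition gnorm (z : gauss) : int := z.1 * z.1 + z.2 * z.2.
Definition gcong (n : nat) (u v : gauss) : bool :=
  (u.1 == v.1 %[mod n%:Z])%Z && (u.2 == v.2 %[mod n%:Z])%Z.

Definition calF (n : nat) : nat :=
  (if n %% 4 == 1 then n.-1 else if n %% 4 == 3 then n.+1 else n)%N.

(* (z / conj z)^F(n) = 1 in Z[i]/nZ[i]: conj z is a unit there (w its inverse),
   and z/conj z = z * w. *)
Definition gauss_fermat_psp (n : nat) (z : gauss) : Prop :=
  composite n /\ coprimez n%:Z (gnorm z) /\
  exists w : gauss, gcong n (gmul w (gconj z)) gone /\
                    gcong n (gpow (gmul z w) (calF n)) gone.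

Definition gauss_carmichael (n : nat) : Prop :=
  composite n /\
  forall z : gauss, coprimez n%:Z (gnorm z) -> gauss_fermat_psp n z.

Definition williams1 (n : nat) : Prop :=
  composite n /\ squarefree n /\
  forall p : nat, prime p -> (p %| n)%N ->
    (p.+1 %| n.+1)%N /\ (p.-1 %| n.-1)%N.

From Pilot Require Import Defs.
From HB Require Import structures.
From mathcomp Require Import all_boot all_order all_algebra.
From mathcomp Require Import fingroup cyclic finfield.
From mathcomp Require Import zify ring.
Set Implicit Arguments. Unset Strict Implicit. Unset Printing Implicit Defensive.
Import GRing.Theory.
Open Scope ring_scope.

(* Everything is checked one prime p | n at a time.  Modulo p, the integers
   give the field 'F_p; for p = 3 (mod 4), -1 is not a square mod p, so the
   Gaussian integers modulo p form the field F_p[i] = F_{p^2}, whose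
   Frobenius x |-> x ^+ p is complex conjugation.  Hence z / conj z has
   norm 1 and order dividing p + 1 there.
   - Forward: Carmichael numbers are squarefree and satisfy Korselt's
     condition p - 1 | n - 1 (test with a lift of a generator of the
     units of 'F_p); with n = 3 (mod 4) this forces p = 3 (mod 4).  Testing
     the Gaussian condition with a lift of a generator of the units of
     F_p[i] gives p + 1 | n + 1.
   - Backward: Korselt's criterion, and its Gaussian analogue obtained from
     the norm-one property above; a squarefree modulus is handled by
     gluing the prime-by-prime congruences. *)

Lemma Fp_fermat p (x : 'F_p) : prime p -> x != 0 -> x ^+ p.-1 = 1.
Proof.
move=> p_pr x_neq0; have := expf_card x; rewrite card_Fp // => x_p.
by apply: (mulfI x_neq0); rewrite -exprS prednK ?prime_gt0 // x_p mulr1.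
Qed.

Lemma dvdz_Fp p (x : int) : prime p -> (p%:Z %| x)%Z = (x%:~R == 0 :> 'F_p).
Proof. by move=> p_pr; rewrite (dvdz_pcharf (pchar_Fp p_pr)). Qed.

Lemma finField_generator (F : finFieldType) :
  exists2 g : F, g != 0 & forall k, g ^+ k = 1 -> (#|F|.-1 %| k)%N.
Proof.
have /cyclicP [u def_units] := field_unit_group_cyclic [set: {unit F}]%G.
exists (val u) => [|k uk1]; first by rewrite -unitfE (valP u).
have : (u ^+ k)%g == 1%g by apply/eqP/val_inj; rewrite FinRing.val_unitX uk1.
by rewrite -order_dvdn /order -def_units card_finField_unit.
Qed.

(* For p = 3 mod 4, -1 is not a square modulo p: otherwise
   -1 = t ^+ (p - 1) = 1 by Fermat, since (p - 1) / 2 is odd. *)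
Lemma Fp_sqr_neqN1 p (t : 'F_p) : prime p -> (p %% 4 = 3)%N -> t * t != -1.
Proof.
move=> p_pr p_mod4; apply/eqP => tt.
have t_neq0 : t != 0.
  by apply: contra_eq_neq tt => ->; rewrite mulr0 eq_sym oppr_eq0 oner_eq0.
have := Fp_fermat p_pr t_neq0.
have -> : p.-1 = (2 * (2 * (p %/ 4)).+1)%N by have := divn_eq p 4; lia.
rewrite exprM expr2 tt -signr_odd /= oddM /= expr1 => N1_eq1.
have : (p %| 2)%N.
  by rewrite (dvdn_pcharf (pchar_Fp p_pr)) -[2%:R]/(1 + 1) -{1}N1_eq1 addNr.
by rewrite dvdn_prime2 // => /eqP p2; rewrite p2 in p_mod4.
Qed.

Lemma Fp_sum_sqr_neq0 p (a b : 'F_p) : prime p -> (p %% 4 = 3)%N ->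
  (a != 0) || (b != 0) -> a * a + b * b != 0.
Proof.
move=> p_pr p_mod4; have [->|b_neq0 _] := eqVneq b 0.
  by rewrite mulr0 addr0 orbF => a_neq0; rewrite mulf_neq0.
apply: contra (Fp_sqr_neqN1 (a / b) p_pr p_mod4) => /eqP sum0.
have -> : a / b * (a / b) = (a * a) / (b * b) by rewrite mulrACA invfM.
by rewrite -[a * a]opprK (addr0_eq sum0) mulNr divff ?mulf_neq0.
Qed.

(* The ring F_p[i] = F_p x F_p with (a, b) * (c, d) = (ac - bd, ad + bc).
   It is the reduction of the Gaussian integers modulo p, and it is a
   field (F_{p^2}) precisely because -1 is not a square mod p = 3 (mod 4);
   the hypothesis is therefore part of the type. *)
Definition Fpi (p : nat) (_ : prime p && (p %% 4 == 3)%N) : Type := ('F_p * 'F_p)%type.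

HB.instance Definition _ p H := Finite.on (@Fpi p H).
HB.instance Definition _ p H := GRing.Zmodule.on (@Fpi p H).

Section FpiRing.
Variables (p : nat) (H : prime p && (p %% 4 == 3)%N).
Local Notation Fpi := (@Fpi p H).

Definition fpi_mul (x y : Fpi) : Fpi :=
  (x.1 * y.1 - x.2 * y.2, x.1 * y.2 + x.2 * y.1).
Definition fpi_one : Fpi := (1, 0).
Definition fpi_inv (x : Fpi) : Fpi :=
  (x.1 / (x.1 * x.1 + x.2 * x.2), - x.2 / (x.1 * x.1 + x.2 * x.2)).

Lemma fpi_mulA : associative fpi_mul.
Proof. by move=> [a b] [c d] [e f]; congr pair; rewrite /=; ring. Qed.
Lemma fpi_mulC : commutative fpi_mul.
Proof. by move=> [a b] [c d]; congr pair; rewrite /=; ring. Qed.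
Lemma fpi_mul1 : left_id fpi_one fpi_mul.
Proof. by move=> [a b]; congr pair; rewrite /=; ring. Qed.
Lemma fpi_mulDl : left_distributive fpi_mul +%R.
Proof. by move=> [a b] [c d] [e f]; congr pair; rewrite /=; ring. Qed.
Lemma fpi_one_neq0 : fpi_one != 0.
Proof. by apply/negP => /eqP [] /eqP; rewrite oner_eq0. Qed.

HB.instance Definition _ := GRing.Zmodule_isComNzRing.Build Fpi
  fpi_mulA fpi_mulC fpi_mul1 fpi_mulDl fpi_one_neq0.

Lemma fpi_mulV (x : Fpi) : x != 0 -> fpi_inv x * x = 1.
Proof.
case/andP: H => p_pr /eqP p_mod4; case: x => a b x_neq0.
have norm_neq0 : a * a + b * b != 0.
  apply: Fp_sum_sqr_neq0 => //; apply: contraNT x_neq0.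
  by rewrite negb_or !negbK => /andP [/eqP -> /eqP ->].
by congr pair; rewrite /=; field.
Qed.

Lemma fpi_inv0 : fpi_inv 0 = 0.
Proof. by rewrite /fpi_inv /= !mul0r oppr0 mul0r. Qed.

HB.instance Definition _ := GRing.ComNzRing_isField.Build Fpi fpi_mulV fpi_inv0.

End FpiRing.

Section FpiFrobenius.
Variables (p : nat) (H : prime p && (p %% 4 == 3)%N).
Local Notation Fpi := (@Fpi p H).

Lemma fpi_prime : prime p. Proof. by case/andP: H. Qed.
Lemma fpi_mod4 : (p %% 4 = 3)%N. Proof. by case/andP: H => _ /eqP. Qed.

Lemma card_Fpi : #|(Fpi : finType)| = (p * p)%N.
Proof. by rewrite card_prod card_Fp // fpi_prime. Qed.

Definition fpi_conj (x : Fpi) : Fpi := (x.1, - x.2).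

Lemma fpi_conjK : involutive fpi_conj.
Proof. by case=> a b; rewrite /fpi_conj /= opprK. Qed.

Definition fpi_emb (a : 'F_p) : Fpi := (a, 0).
Definition fpi_i : Fpi := (0, 1).

Lemma fpi_embX a k : fpi_emb a ^+ k = fpi_emb (a ^+ k).
Proof. by elim: k => // k IH; rewrite !exprS IH; congr pair; rewrite /=; ring. Qed.

Lemma fpi_decomp (x : Fpi) : x = fpi_emb x.1 + fpi_i * fpi_emb x.2.
Proof. by case: x => a b; congr pair; rewrite /=; ring. Qed.

Lemma pchar_Fpi : p \in [pchar Fpi].
Proof.
have natE k : (k%:R : Fpi) = (k%:R, 0).
  by elim: k => // k IH; rewrite -addn1 !natrD IH; congr pair; rewrite /= addr0.
by rewrite inE fpi_prime natE pchar_Fp_0 ?fpi_prime.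
Qed.

(* Since p = 3 mod 4, i ^+ p = i ^+ 3 = -i. *)
Lemma fpi_iX_p : fpi_i ^+ p = - fpi_i.
Proof.
have i2 : fpi_i ^+ 2 = -1 by congr pair; rewrite /=; ring.
have p_eq : p = (4 * (p %/ 4) + 3)%N by have := divn_eq p 4; rewrite fpi_mod4; lia.
have i4 : fpi_i ^+ 4 = 1 by rewrite (exprM _ 2 2) i2 sqrrN expr1n.
by rewrite [X in _ ^+ X]p_eq exprD exprM i4 expr1n mul1r exprSr i2 mulN1r.
Qed.

(* The Frobenius map x |-> x ^+ p is conjugation: it fixes F_p (Fermat)
   and sends i to -i. *)
Lemma fpi_frobenius (x : Fpi) : x ^+ p = fpi_conj x.
Proof.
have Fp_fix (a : 'F_p) : a ^+ p = a by have := expf_card a; rewrite card_Fp // fpi_prime.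
have p_char := pchar_Fpi.
rewrite {1}(fpi_decomp x) -(pFrobenius_autE p_char).
rewrite pFrobenius_autD_comm ?pFrobenius_autM_comm; try exact: mulrC.
rewrite !pFrobenius_autE fpi_iX_p !fpi_embX !Fp_fix.
by congr pair; rewrite /=; ring.
Qed.

(* If w inverts conj z, then z * w has norm 1, hence order dividing p + 1:
   (z w) ^+ p.+1 = (w * z ^+ p) * (w * z ^+ p) ^+ p = 1. *)
Lemma fpi_normX_eq1 (z w : Fpi) : w * fpi_conj z = 1 -> (z * w) ^+ p.+1 = 1.
Proof.
rewrite -fpi_frobenius => wz1.
have wz1_p : w ^+ p * z = 1.
  by rewrite -[z]fpi_conjK -!fpi_frobenius -exprMn wz1 expr1n.
by rewrite exprSr exprMn -[1]mulr1 -{1}wz1 -wz1_p; ring.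
Qed.

End FpiFrobenius.

(* In a field, if w inverts g ^+ m.+1 and (g * w) ^+ k = 1, then
   g ^+ (m * k) = 1: indeed g * w = (g ^+ m)^-1. *)
Lemma expf_inv_cancel (F : fieldType) (g w : F) m k :
  g != 0 -> w * g ^+ m.+1 = 1 -> (g * w) ^+ k = 1 -> g ^+ (m * k) = 1.
Proof.
move=> g_neq0 wg1 gwk1; have gm_neq0 : g ^+ m != 0 by rewrite expf_neq0.
have gw : g * w = (g ^+ m)^-1.
  by apply: (mulfI gm_neq0); rewrite divff // -wg1 exprSr; ring.
by move: gwk1; rewrite gw exprVn => /eqP; rewrite invr_eq1 -exprM => /eqP.
Qed.

Section Reduction.
Variables (p : nat) (H : prime p && (p %% 4 == 3)%N).
Local Notation Fpi := (@Fpi p H).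

Definition gred (z : gauss) : Fpi := (z.1%:~R, z.2%:~R).

Lemma gred_mul z w : gred (gmul z w) = gred z * gred w.
Proof. by congr pair; rewrite /= ?rmorphB ?rmorphD ?rmorphM. Qed.

Lemma gred_one : gred gone = 1.
Proof. by []. Qed.

Lemma gred_pow z k : gred (gpow z k) = gred z ^+ k.
Proof. by elim: k => // k IH; rewrite /gpow iterS -/(gpow z k) gred_mul IH exprS. Qed.

Lemma gred_conj z : gred (gconj z) = fpi_conj (gred z).
Proof. by rewrite /gred /fpi_conj /= rmorphN. Qed.

Lemma gred_gcong n u v : (p %| n)%N -> gcong n u v -> gred u = gred v.
Proof.
move=> p_dvd_n /andP [eq1 eq2].
have int_eq (a b : int) : (a == b %[mod n%:Z])%Z -> (a%:~R : 'F_p) = b%:~R.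
  rewrite eqz_mod_dvd => /(dvdz_trans (p_dvd_n : (p%:Z %| n%:Z)%Z)).
  by rewrite (dvdz_Fp _ (fpi_prime H)) rmorphB subr_eq0 => /eqP.
by rewrite /gred (int_eq _ _ eq1) (int_eq _ _ eq2).
Qed.

End Reduction.

Lemma squarefree_dvdz n (x : int) : (0 < n)%N -> squarefree n ->
  (forall p, prime p -> (p %| n)%N -> (p%:Z %| x)%Z) -> (n%:Z %| x)%Z.
Proof.
move=> n_gt0 sqf_n dvd_x; apply/(dvdn_partP _ n_gt0) => p.
rewrite mem_primes => /and3P [p_pr _ p_dvd_n]; rewrite p_part.
have : (logn p n <= 1)%N.
  rewrite leqNgt; apply/negP; rewrite -pfactor_dvdn // -mulnn.
  by apply/negP/sqf_n.
by case: (logn p n) => [|[|]] //= _; rewrite ?dvd1n ?expn1 //; apply: dvd_x.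
Qed.

Lemma gcong_of_gred n u v : (0 < n)%N -> squarefree n ->
  (forall p, prime p -> (p %| n)%N -> (p %% 4 = 3)%N) ->
  (forall p (H : prime p && (p %% 4 == 3)%N), (p %| n)%N -> gred H u = gred H v) ->
  gcong n u v.
Proof.
move=> n_gt0 sqf_n mod4 eq_red.
have dvd_diff p : prime p -> (p %| n)%N ->
    (p%:Z %| u.1 - v.1)%Z /\ (p%:Z %| u.2 - v.2)%Z.
  move=> p_pr p_dvd_n; have H : prime p && (p %% 4 == 3)%N by rewrite p_pr mod4.
  have [/= red1 red2] := (congr1 fst (eq_red p H p_dvd_n), congr1 snd (eq_red p H p_dvd_n)).
  by rewrite !dvdz_Fp // !rmorphB /= red1 red2 !subrr.
by rewrite /gcong !eqz_mod_dvd !squarefree_dvdz // => p p_pr /(dvd_diff p p_pr) [].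
Qed.

Lemma squarefree_cofactor n p : squarefree n -> prime p -> (p %| n)%N ->
  coprime p (n %/ p).
Proof.
move=> sqf_n p_pr p_dvd_n; rewrite prime_coprime //; apply/negP => p_dvd_q.
by have := sqf_n p p_pr; rewrite -{1}(divnK p_dvd_n) mulnC dvdn_pmul2l ?prime_gt0 ?p_dvd_q.
Qed.

Lemma coprime_of_cofactor n p c : prime p -> (p %| n)%N ->
  (c%:R : 'F_p) != 0 -> coprime c (n %/ p) -> coprime c n.
Proof.
move=> p_pr p_dvd_n c_neq0 c_q; rewrite -(divnK p_dvd_n) coprimeMr c_q.
by rewrite coprime_sym -unitFpE // unitfE.
Qed.

Lemma chinese_Fp p q (x : 'F_p) r : prime p -> coprime p q ->
  ((chinese p q x r)%:R : 'F_p) = x.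
Proof.
by move=> p_pr pq; rewrite -Fp_nat_mod // (chinese_modl pq) Fp_nat_mod // natr_Zp.
Qed.

Lemma coprime_chinese1 p q x : coprime p q -> coprime (chinese p q x 1) q.
Proof. by move=> pq; rewrite -coprime_modl (chinese_modr pq) coprime_modl coprime1n. Qed.

Lemma carmichael_dvd n (a : int) : carmichael n -> coprimez a n%:Z ->
  (n%:Z %| a ^+ n.-1 - 1)%Z.
Proof. by move=> [_ fermat] a_n; rewrite -eqz_mod_dvd fermat. Qed.

Lemma expr1D_linear d m j : (d %| m * m)%N ->
  (d%:Z %| (1 + m%:Z) ^+ j - (1 + (j * m)%N%:Z))%Z.
Proof.
move=> d_dvd_mm; elim: j => [|j IH]; first by rewrite expr0 mul0n addr0 subrr dvdz0.
have -> : (1 + m%:Z) ^+ j.+1 - (1 + (j.+1 * m)%N%:Z) =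
  ((1 + m%:Z) ^+ j - (1 + (j * m)%N%:Z)) * (1 + m%:Z) + j%:Z * (m * m)%N%:Z.
  by rewrite exprSr -[j.+1]addn1 !PoszM PoszD; ring.
by apply: rpredD; [exact: dvdz_mulr | exact: dvdz_mull].
Qed.

(* Carmichael numbers are squarefree: if p ^ 2 divides n = p m, then
   a = 1 + m is coprime to n and a ^+ (n - 1) = 1 + (n - 1) m (mod n),
   so p m divides (n - 1) m, i.e. p divides n - 1, contradicting p | n. *)
Lemma carmichael_squarefree n : (0 < n)%N -> carmichael n -> squarefree n.
Proof.
move=> n_gt0 carm_n p p_pr; apply/negP => /dvdnP [k n_eq].
pose m := (p * k)%N.
have m_gt0 : (0 < m)%N.
  by rewrite muln_gt0 prime_gt0 //=; move: n_gt0; rewrite n_eq muln_gt0 => /andP [].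
have n_pm : n = (p * m)%N by rewrite n_eq /m; ring.
have n_dvd_mm : (n %| m * m)%N by apply/dvdnP; exists k; rewrite n_eq /m; ring.
have a_n : coprimez (1 + m%:Z) n%:Z.
  by apply/coprimezP; exists (1 - m%:Z, k%:Z); rewrite /= n_eq /m !PoszM; ring.
have : (n%:Z %| (n.-1 * m)%N%:Z)%Z.
  have -> : (n.-1 * m)%N%:Z = ((1 + m%:Z) ^+ n.-1 - 1)
      - ((1 + m%:Z) ^+ n.-1 - (1 + (n.-1 * m)%N%:Z)) by ring.
  by rewrite rpredB ?carmichael_dvd ?expr1D_linear.
rewrite dvdzE /= {1}n_pm dvdn_pmul2r // => p_dvd_pred.
have : (p %| n - n.-1)%N by rewrite dvdn_sub // n_pm dvdn_mulr.
have -> : (n - n.-1 = 1)%N by lia.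
by rewrite dvdn1 => /eqP p1; rewrite p1 in p_pr.
Qed.

(* Korselt's criterion, necessity: p - 1 divides n - 1 for every prime
   p | n. Lift a generator g of the units of 'F_p to a = g (mod p),
   a = 1 (mod n/p); then g ^+ (n - 1) = 1 in 'F_p. *)
Lemma carmichael_korselt n p : carmichael n -> squarefree n -> prime p ->
  (p %| n)%N -> (p.-1 %| n.-1)%N.
Proof.
move=> carm_n sqf_n p_pr p_dvd_n.
have pq := squarefree_cofactor sqf_n p_pr p_dvd_n.
have [g g_neq0 g_order] := finField_generator ('F_p : finFieldType).
rewrite card_Fp // in g_order; apply: g_order.
pose a := chinese p (n %/ p) g 1.
have a_g : (a%:Z%:~R : 'F_p) = g by exact: chinese_Fp.
have a_n : coprimez a%:Z n%:Z.
  by rewrite coprimezE /= (coprime_of_cofactor p_pr) ?coprime_chinese1 ?chinese_Fp.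
have := dvdz_trans (p_dvd_n : (p%:Z %| n%:Z)%Z) (carmichael_dvd carm_n a_n).
by rewrite dvdz_Fp // rmorphB rmorphXn rmorph1 subr_eq0 -a_g => /eqP.
Qed.

(* For n = 3 (mod 4), a prime factor p with p - 1 | n - 1 is 3 (mod 4):
   p is odd, and p = 1 (mod 4) would give 4 | n - 1 = 2 (mod 4). *)
Lemma korselt_mod4 n p : (n %% 4 = 3)%N -> prime p -> (p %| n)%N ->
  (p.-1 %| n.-1)%N -> (p %% 4 = 3)%N.
Proof.
move=> n_mod4 p_pr p_dvd_n pred_dvd.
have p_odd : odd p.
  by apply: contraT => /(prime_oddPn p_pr) p2; move: p_dvd_n n_mod4; rewrite p2; lia.
have p_mod4_neq1 : (p %% 4 != 1)%N.
  apply/negP => /eqP p_mod4.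
  have : (4 %| n.-1)%N by apply: dvdn_trans pred_dvd; have := divn_eq p 4; lia.
  by have := divn_eq n 4; lia.
have : (p %% 2 = 1)%N by rewrite modn2 p_odd.
lia.
Qed.

Lemma korselt_carmichael n : (0 < n)%N -> composite n -> squarefree n ->
  (forall p, prime p -> (p %| n)%N -> (p.-1 %| n.-1)%N) -> carmichael n.
Proof.
move=> n_gt0 comp_n sqf_n korselt; split=> // a a_n.
rewrite eqz_mod_dvd squarefree_dvdz // => p p_pr p_dvd_n.
rewrite dvdz_Fp // rmorphB rmorph1 rmorphXn subr_eq0.
have [k ->] := dvdnP (korselt p p_pr p_dvd_n).
have a_neq0 : (a%:~R : 'F_p) != 0.
  rewrite -dvdz_Fp //; apply: contraL a_n => p_dvd_a; rewrite /coprimez.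
  apply/eqP => gcd1; have : (p%:Z %| gcdz a n%:Z)%Z by rewrite dvdz_gcd p_dvd_a.
  by rewrite gcd1 dvdzE /= dvdn1 => /eqP p1; rewrite p1 in p_pr.
by rewrite mulnC exprM Fp_fermat // expr1n.
Qed.

Lemma calF_mod4_3 n : (n %% 4 = 3)%N -> calF n = n.+1.
Proof. by rewrite /calF => ->. Qed.

(* conj z is invertible modulo n when its norm z * conj z is coprime to n:
   take w = c z where c * gnorm z = 1 (mod n).  (The name gnorm is
   qualified because the group library also defines a gnorm.) *)
Lemma gconj_inverse n z : coprimez n%:Z (Defs.gnorm z) ->
  exists w, gcong n (gmul w (gconj z)) gone.
Proof.
case/coprimezP => [[u c] /= bezout]; exists (c * z.1, c * z.2).
apply/andP; split; rewrite eqz_mod_dvd /=.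
  have -> : c * z.1 * z.1 - c * z.2 * - z.2 - 1 = - u * n%:Z.
    by rewrite -bezout /Defs.gnorm; ring.
  exact: dvdz_mull.
by have -> : c * z.1 * - z.2 + c * z.2 * z.1 - 0 = 0 by ring.
Qed.

(* Every nonzero x in F_p[i] (p | n, n squarefree) is the reduction of a
   Gaussian integer whose norm is coprime to n: lift both coordinates by
   the Chinese remainder theorem, choosing residues 1 and 0 modulo n / p. *)
Lemma gauss_lift n p (H : prime p && (p %% 4 == 3)%N) (x : Fpi H) :
  squarefree n -> (p %| n)%N -> x != 0 ->
  exists2 z : gauss, gred H z = x & coprimez n%:Z (Defs.gnorm z).
Proof.
have p_pr := fpi_prime H; move=> sqf_n p_dvd_n x_neq0.
have pq := squarefree_cofactor sqf_n p_pr p_dvd_n; set q := (n %/ p)%N in pq.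
pose z1 := chinese p q x.1 1; pose z2 := chinese p q x.2 0.
exists (z1%:Z, z2%:Z).
  by rewrite [RHS](surjective_pairing x); congr pair; exact: chinese_Fp.
have -> : Defs.gnorm (z1%:Z, z2%:Z) = (z1 * z1 + z2 * z2)%N%:Z.
  by rewrite /Defs.gnorm /= PoszD !PoszM.
rewrite coprimezE /= coprime_sym (coprime_of_cofactor p_pr) //.
  rewrite natrD !natrM !chinese_Fp //; apply: Fp_sum_sqr_neq0 (fpi_mod4 H) _ => //.
  apply: contraNT x_neq0; rewrite negb_or !negbK => /andP [/eqP x1 /eqP x2].
  by rewrite [x]surjective_pairing x1 x2.
have z1_q : (z1 %% q = 1 %% q)%N by exact: chinese_modr.
have z2_q : (z2 %% q = 0)%N by rewrite /z2 (chinese_modr pq) mod0n.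
rewrite -coprime_modl -modnDm -modnMm z1_q -[(z2 * z2 %% q)%N]modnMm z2_q muln0 mod0n.
by rewrite addn0 modnMm muln1 modn_mod coprime_modl coprime1n.
Qed.

(* The Gaussian analogue of Korselt's necessity: p + 1 divides n + 1.
   Lift a generator g of the units of F_p[i] (of order p^2 - 1) to z; since
   conj g = g ^+ p, the Gaussian Fermat condition gives
   g ^+ ((p - 1) (n + 1)) = 1. *)
Lemma gauss_carmichael_pp1 n p : (n %% 4 = 3)%N -> gauss_carmichael n ->
  squarefree n -> prime p -> (p %% 4 = 3)%N -> (p %| n)%N -> (p.+1 %| n.+1)%N.
Proof.
move=> n_mod4 gcarm_n sqf_n p_pr p_mod4 p_dvd_n.
have H : prime p && (p %% 4 == 3)%N by rewrite p_pr p_mod4.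
have [g g_neq0 g_order] := finField_generator (Fpi H : finFieldType).
have [z z_g z_n] := gauss_lift sqf_n p_dvd_n g_neq0.
have [_ [_ [w [w_inv zw_fermat]]]] := gcarm_n.2 z z_n.
move: (gred_gcong H p_dvd_n w_inv) (gred_gcong H p_dvd_n zw_fermat).
rewrite calF_mod4_3 // gred_pow !gred_mul gred_conj gred_one z_g -fpi_frobenius.
rewrite -[X in _ * g ^+ X](prednK (prime_gt0 p_pr)) => wg1 /(expf_inv_cancel g_neq0 wg1).
move/g_order; rewrite card_Fpi.
have -> : ((p * p).-1 = p.-1 * p.+1)%N by have := prime_gt0 p_pr; nia.
by rewrite dvdn_pmul2l // -subn1 subn_gt0 prime_gt1.
Qed.

(* Converse: for n squarefree with all prime factors p = 3 (mod 4) and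
   p + 1 | n + 1, every z of norm coprime to n is a Gaussian Fermat
   witness, since z / conj z has norm 1 and so order dividing p + 1
   in each F_p[i]. *)
Lemma gauss_carmichael_of_pp1 n : (0 < n)%N -> (n %% 4 = 3)%N -> composite n ->
  squarefree n ->
  (forall p, prime p -> (p %| n)%N -> (p %% 4 = 3)%N /\ (p.+1 %| n.+1)%N) ->
  gauss_carmichael n.
Proof.
move=> n_gt0 n_mod4 comp_n sqf_n pp1; split=> // z z_n; do 2!split=> //.
have [w w_inv] := gconj_inverse z_n; exists w; split=> //.
rewrite calF_mod4_3 //; apply: gcong_of_gred => // [p p_pr /(pp1 p p_pr) [] //|p H p_dvd_n].
have [_ /dvdnP [k ->]] := pp1 p (fpi_prime H) p_dvd_n.
have := gred_gcong H p_dvd_n w_inv; rewrite gred_mul gred_conj gred_one => wz1.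
by rewrite gred_pow gred_mul mulnC exprM (fpi_normX_eq1 wz1) expr1n.
Qed.

Close Scope ring_scope.

Theorem mainTheorem16 (n : nat) (hn : (0 < n)%N) (h4 : n %% 4 = 3) :
  (carmichael n /\ gauss_carmichael n) <->
  (williams1 n /\ forall p : nat, prime p -> (p %| n)%N -> p %% 4 = 3).
Proof.
split=> [[carm_n gcarm_n] | [[comp_n [sqf_n williams]] mod4]].
- have sqf_n := carmichael_squarefree hn carm_n.
  have korselt := carmichael_korselt carm_n sqf_n.
  have mod4 p (p_pr : prime p) (p_dvd_n : p %| n) : p %% 4 = 3.
    exact: korselt_mod4 h4 p_pr p_dvd_n (korselt p p_pr p_dvd_n).
  split=> //; split; first by case: carm_n.
  split=> // p p_pr p_dvd_n; split; last exact: korselt.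
  exact: gauss_carmichael_pp1 h4 gcarm_n sqf_n p_pr (mod4 p p_pr p_dvd_n) p_dvd_n.
- split; first by apply: korselt_carmichael => // p p_pr /(williams p p_pr) [].
  apply: gauss_carmichael_of_pp1 => // p p_pr p_dvd_n.
  by split; [exact: mod4 | case: (williams p p_pr p_dvd_n)].
Qed.
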